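(* Let $s>0$ and let $(X,d)$ be a compact monotone metric space with $\mathcal{H}^s(X)>0$. Then there exists an $s$-Hölder function $g:X\to\mathbb{R}$ such that $g(X)$ is a non-degenerate closed interval.
   Context: A metric space $(X,d)$ is monotone if there exist a linear order $<$ on $X$ and a constant $C$ such that $\operatorname{diam}([a,b])\le C\,d(a,b)$ for all $a,b\in X$, where $[a,b]=\{x\in X: a\le x\le b\}$; it is then called $C$-monotone. $\mathcal{H}^s$ denotes the $s$-dimensional Hausdorff measure. A function $g$ is $s$-Hölder if there is $K$ with $|g(a)-g(b)|\le K\,d(a,b)^s$ for all $a,b$. *)

From Stdlib Require Import Reals Lra Classical ClassicalEpsilon.
Open Scope R_scope.

Definition is_metric {X : Type} (d : X -> X -> R) : Prop :=
  (forall x y, 0 <= d x y) /\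
  (forall x y, d x y = 0 <-> x = y) /\
  (forall x y, d x y = d y x) /\
  (forall x y z, d x z <= d x y + d y z).

Definition is_open {X : Type} (d : X -> X -> R) (U : X -> Prop) : Prop :=
  forall x, U x -> exists r, 0 < r /\ forall y, d x y < r -> U y.

Definition compact_space {X : Type} (d : X -> X -> R) : Prop :=
  forall (I : Type) (O : I -> X -> Prop),
    (forall i, is_open d (O i)) ->
    (forall x, exists i, O i x) ->
    exists l : list I, forall x, exists i, List.In i l /\ O i x.

Definition diam_le {X : Type} (d : X -> X -> R) (A : X -> Prop) (r : R) : Prop :=
  forall x y, A x -> A y -> d x y <= r.

Definition dists {X : Type} (d : X -> X -> R) (A : X -> Prop) : R -> Prop :=
  fun r => exists x y, A x /\ A y /\ r = d x y.

(** Diameter (sup of distances); 0 for the empty set. Unbounded sets get the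
    junk value 0, but they never occur below (covers have diam <= delta). *)
Definition diam {X : Type} (d : X -> X -> R) (A : X -> Prop) : R.
Proof.
  destruct (excluded_middle_informative
              (bound (dists d A) /\ exists x, A x)) as [[Hb Hne] | _].
  - assert (He : exists r, dists d A r).
    { destruct Hne as [x Hx]. exists (d x x). exists x, x. auto. }
    exact (proj1_sig (completeness _ Hb He)).
  - exact 0.
Defined.

(** r^s with the convention 0^s = 0 (s > 0); note Stdlib's Rpower 0 s = 1. *)
Definition powS (r s : R) : R :=
  if Rle_dec r 0 then 0 else Rpower r s.

(** Extended nonnegative reals [0, +oo]. *)
Inductive ER : Type := Fin : R -> ER | PInf : ER.

Definition ER_lt (a b : ER) : Prop :=
  match a, b with
  | Fin x, Fin y => x < y
  | Fin _, PInf => True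
  | PInf, _ => False
  end.

Definition series_sum (a : nat -> R) : ER.
Proof.
  set (E := fun r => exists n, r = sum_f_R0 a n).
  destruct (excluded_middle_informative (bound E)) as [Hb | _].
  - assert (He : exists r, E r) by (exists (sum_f_R0 a 0); exists 0%nat; reflexivity).
    exact (Fin (proj1_sig (completeness E Hb He))).
  - exact PInf.
Defined.

(** Infimum in [0,+oo] of a set of elements of [0,+oo] (inf of empty = +oo). *)
Definition ER_inf (P : ER -> Prop) : ER.
Proof.
  set (E := fun r => P (Fin (- r))).
  destruct (excluded_middle_informative (bound E /\ exists r, E r)) as [[Hb He] | _].
  - exact (Fin (- proj1_sig (completeness E Hb He))).
  - exact PInf.
Defined.

(** Supremum in [0,+oo] of a set of elements of [0,+oo] (sup of empty = 0). *)
Definition ER_sup (P : ER -> Prop) : ER.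
Proof.
  set (E := fun r => P (Fin r)).
  destruct (excluded_middle_informative (P PInf \/ ~ bound E)) as [_ | _].
  - exact PInf.
  - destruct (excluded_middle_informative (exists r, E r)) as [He | _].
    + destruct (excluded_middle_informative (bound E)) as [Hb | _].
      * exact (Fin (proj1_sig (completeness E Hb He))).
      * exact PInf.
    + exact (Fin 0).
Defined.

Definition delta_cover {X : Type} (d : X -> X -> R) (delta : R)
    (U : nat -> X -> Prop) : Prop :=
  (forall x, exists n, U n x) /\ (forall n, diam_le d (U n) delta).

Definition Hs_delta {X : Type} (d : X -> X -> R) (s delta : R) : ER :=
  ER_inf (fun v => exists U : nat -> X -> Prop,
            delta_cover d delta U /\
            v = series_sum (fun n => powS (diam d (U n)) s)).

(** H^s(X) = lim_{delta -> 0} H^s_delta(X) = sup_{delta > 0} H^s_delta(X). *)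
Definition hausdorff_measure {X : Type} (d : X -> X -> R) (s : R) : ER :=
  ER_sup (fun v => exists delta, 0 < delta /\ v = Hs_delta d s delta).

Definition linear_order {X : Type} (le : X -> X -> Prop) : Prop :=
  (forall x, le x x) /\
  (forall x y, le x y -> le y x -> x = y) /\
  (forall x y z, le x y -> le y z -> le x z) /\
  (forall x y, le x y \/ le y x).

Definition monotone_space {X : Type} (d : X -> X -> R) : Prop :=
  exists (le : X -> X -> Prop) (C : R),
    linear_order le /\
    forall a b, diam_le d (fun x => le a x /\ le x b) (C * d a b).

Definition holder {X : Type} (d : X -> X -> R) (s : R) (g : X -> R) : Prop :=
  exists K, forall a b, Rabs (g a - g b) <= K * powS (d a b) s.

(** Let (X,d) be compact and C-monotone for a linear order <=, and H^s(X) > 0.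
    The proof works with the finite Hausdorff content
        F(A) = inf { sum_i r_i^s : A covered by finitely many sets of diameter <= r_i }
    and its distribution function g(x) = F({y | y <= x}).
    - F is monotone, finitely subadditive and F(A) <= r^s whenever diam A <= r;
      hence g is nondecreasing and g(b) <= g(a) + (C d(a,b))^s for a <= b,
      which makes g an s-Hölder function.
    - A finite cover of small cost is a delta-cover of small cost, so F(X) = 0
      would force H^s(X) = 0; thus g(max X) = F(X) > 0, while g(min X) = 0.
    - Compactness and monotonicity make the order complete: every nonempty set
      has a supremum (and an infimum) lying in its metric closure.  For t in
      [0, g(max X)] the supremum x of { y | g y <= t } then satisfies g x = t:
      g x <= t by continuity from below, and g x < t is impossible, as the
      infimum of the points above x is either approached from above or is an
      immediate successor of x.
    Hence g(X) = [0, F(X)]. *)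

From Stdlib Require Import Reals Lra Classical ClassicalEpsilon List Lia.
Open Scope R_scope.

Lemma powS_nonneg (r s : R) : 0 <= powS r s.
Proof.
  unfold powS. destruct (Rle_dec r 0); [lra|]. left. apply exp_pos.
Qed.

Lemma powS_0 (s : R) : powS 0 s = 0.
Proof. unfold powS. destruct (Rle_dec 0 0); lra. Qed.

Lemma powS_mono (a b s : R) : 0 < s -> a <= b -> powS a s <= powS b s.
Proof.
  intros Hs Hab. unfold powS.
  destruct (Rle_dec a 0), (Rle_dec b 0); try lra.
  - left. apply exp_pos.
  - apply Rle_Rpower_l; lra.
Qed.

Lemma powS_lt_inv (a b s : R) : 0 < s -> powS a s < powS b s -> a < b.
Proof.
  intros Hs H. destruct (Rlt_le_dec a b) as [|Hba]; auto.
  pose proof (powS_mono b a s Hs Hba). lra.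
Qed.

Lemma powS_small (s eps : R) : 0 < s -> 0 < eps ->
  exists delta, 0 < delta /\ forall r, r < delta -> powS r s < eps.
Proof.
  intros Hs He. exists (Rpower eps (/ s)). split; [apply exp_pos|].
  intros r Hr. unfold powS. destruct (Rle_dec r 0); [lra|].
  replace eps with (Rpower (Rpower eps (/ s)) s).
  - apply Rlt_Rpower_l; lra.
  - rewrite Rpower_mult. replace (/ s * s) with 1 by (field; lra).
    apply Rpower_1; exact He.
Qed.

Lemma powS_mul (c r s : R) : 0 < c -> 0 <= r -> powS (c * r) s = Rpower c s * powS r s.
Proof.
  intros Hc Hr. unfold powS. destruct (Rle_dec r 0) as [Hr0|Hr0].
  - replace r with 0 by lra. rewrite Rmult_0_r. destruct (Rle_dec 0 0); lra.
  - destruct (Rle_dec (c * r) 0) as [Hcr|].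
    + exfalso. assert (0 < c * r) by (apply Rmult_lt_0_compat; lra). lra.
    + rewrite Rpower_mult_distr; lra.
Qed.

(** The infimum of a nonempty set of nonnegative reals (0 for other sets). *)
Definition inf_nonneg (P : R -> Prop) : R.
Proof.
  destruct (excluded_middle_informative
              ((forall c, P c -> 0 <= c) /\ exists c, P c)) as [[Hnn Hne] | _].
  - assert (Hb : bound (fun r => P (- r))).
    { exists 0. intros r Hr. apply Hnn in Hr. lra. }
    assert (He : exists r, P (- r)).
    { destruct Hne as [c Hc]. exists (- c). rewrite Ropp_involutive. exact Hc. }
    exact (- proj1_sig (completeness _ Hb He)).
  - exact 0.
Defined.

Lemma inf_nonneg_ge0 (P : R -> Prop) : 0 <= inf_nonneg P.
Proof.
  unfold inf_nonneg. destruct (excluded_middle_informative _) as [[Hnn Hne] | _]; [|lra].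
  destruct (completeness _ _ _) as [sg [Hub Hlub]]. simpl.
  assert (sg <= 0) by (apply Hlub; intros r Hr; apply Hnn in Hr; lra). lra.
Qed.

Lemma inf_nonneg_le (P : R -> Prop) (c : R) :
  (forall c, P c -> 0 <= c) -> P c -> inf_nonneg P <= c.
Proof.
  intros Hnn Hc. unfold inf_nonneg.
  destruct (excluded_middle_informative _) as [[Hnn' Hne] | Hn].
  - destruct (completeness _ _ _) as [sg [Hub Hlub]]. simpl.
    assert (- c <= sg) by (apply Hub; rewrite Ropp_involutive; exact Hc). lra.
  - exfalso. apply Hn. split; eauto.
Qed.

Lemma inf_nonneg_approx (P : R -> Prop) :
  (forall c, P c -> 0 <= c) -> (exists c, P c) ->
  forall eps, 0 < eps -> exists c, P c /\ c < inf_nonneg P + eps.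
Proof.
  intros Hnn Hne eps He. unfold inf_nonneg.
  destruct (excluded_middle_informative _) as [[Hnn' Hne'] | Hn]; [|tauto].
  destruct (completeness _ _ _) as [sg [Hub Hlub]]. simpl.
  apply NNPP. intros Hno.
  assert (sg <= sg - eps); [|lra].
  apply Hlub. intros r Hr. destruct (Rle_lt_dec r (sg - eps)) as [|Hlt]; auto.
  exfalso. apply Hno. exists (- r). split; [exact Hr | lra].
Qed.

Section FiniteContent.
Context {X : Type}.
Variables (d : X -> X -> R) (s : R).

Definition fcover (A : X -> Prop) (l : list ((X -> Prop) * R)) : Prop :=
  (forall x, A x -> exists p, In p l /\ fst p x) /\
  (forall p, In p l -> 0 <= snd p /\ diam_le d (fst p) (snd p)).

Definition lsum (l : list ((X -> Prop) * R)) : R :=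
  fold_right (fun p acc => powS (snd p) s + acc) 0 l.

Definition cost (A : X -> Prop) (c : R) : Prop :=
  exists l, fcover A l /\ c = lsum l.

(** The finite Hausdorff content [F(A)]; it is 0 for sets without finite cover. *)
Definition content (A : X -> Prop) : R := inf_nonneg (cost A).

Lemma lsum_nonneg l : 0 <= lsum l.
Proof.
  induction l as [|p l IH]; simpl; [lra|]. pose proof (powS_nonneg (snd p) s). lra.
Qed.

Lemma lsum_app l1 l2 : lsum (l1 ++ l2) = lsum l1 + lsum l2.
Proof. induction l1 as [|p l IH]; simpl; [lra|]. rewrite IH. lra. Qed.

Lemma lsum_ge_piece l p : In p l -> powS (snd p) s <= lsum l.
Proof.
  induction l as [|q l IH]; simpl; [tauto|]. intros [<- | Hp].
  - pose proof (lsum_nonneg l). lra.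
  - pose proof (powS_nonneg (snd q) s). specialize (IH Hp). lra.
Qed.

Lemma cost_nonneg A c : cost A c -> 0 <= c.
Proof. intros [l [_ ->]]. apply lsum_nonneg. Qed.

Lemma content_nonneg A : 0 <= content A.
Proof. apply inf_nonneg_ge0. Qed.

Lemma content_le A c : cost A c -> content A <= c.
Proof. apply inf_nonneg_le, cost_nonneg. Qed.

Lemma content_approx A : (exists c, cost A c) ->
  forall eps, 0 < eps -> exists l, fcover A l /\ lsum l < content A + eps.
Proof.
  intros Hne eps He.
  destruct (inf_nonneg_approx (cost A) (cost_nonneg A) Hne eps He) as [c [[l [Hl ->]] Hc]].
  exists l. split; assumption.
Qed.

Lemma content_subadditive A B1 B2 :
  (exists c, cost B1 c) -> (exists c, cost B2 c) ->
  (forall x, A x -> B1 x \/ B2 x) -> content A <= content B1 + content B2.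
Proof.
  intros H1 H2 HA. apply Rle_plus_epsilon. intros eps He.
  destruct (content_approx B1 H1 (eps / 2)) as [l1 [[Hc1 Hv1] Hs1]]; [lra|].
  destruct (content_approx B2 H2 (eps / 2)) as [l2 [[Hc2 Hv2] Hs2]]; [lra|].
  assert (content A <= lsum (l1 ++ l2)); [|rewrite lsum_app in *; lra].
  apply content_le. exists (l1 ++ l2). split; [split|reflexivity].
  - intros x Hx. destruct (HA x Hx) as [Hb | Hb].
    + destruct (Hc1 x Hb) as [p [Hp Hpx]]. exists p. split; [apply in_or_app|]; auto.
    + destruct (Hc2 x Hb) as [p [Hp Hpx]]. exists p. split; [apply in_or_app|]; auto.
  - intros p Hp. apply in_app_or in Hp. destruct Hp; auto.
Qed.

Lemma content_mono A B : (exists c, cost B c) -> (forall x, A x -> B x) ->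
  content A <= content B.
Proof.
  intros H HA. apply Rle_plus_epsilon. intros eps He.
  destruct (content_approx B H eps He) as [l [[Hc Hv] Hs]].
  assert (content A <= lsum l); [|lra].
  apply content_le. exists l. split; [split|]; auto.
Qed.

Lemma content_diam A r : 0 <= r -> diam_le d A r -> content A <= powS r s.
Proof.
  intros Hr HA. replace (powS r s) with (lsum ((A, r) :: nil)) by (simpl; lra).
  apply content_le. eexists. split; [split|reflexivity].
  - intros x Hx. exists (A, r). simpl. auto.
  - intros p [<- | []]. simpl. auto.
Qed.

End FiniteContent.

Lemma ER_inf_small (P : ER -> Prop) :
  (forall r, P (Fin r) -> 0 <= r) ->
  (forall eps, 0 < eps -> exists r, P (Fin r) /\ r < eps) ->
  exists h, ER_inf P = Fin h /\ h <= 0.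
Proof.
  intros Hnn Hsmall. unfold ER_inf. cbv zeta.
  destruct (excluded_middle_informative _) as [[Hb He] | Hn].
  - destruct (completeness _ Hb He) as [sg [Hub Hlub]]. simpl.
    exists (- sg). split; [reflexivity|].
    destruct (Rlt_le_dec sg 0) as [Hlt|]; [|lra]. exfalso.
    destruct (Hsmall (- sg)) as [r [Hr Hr2]]; [lra|].
    assert (- r <= sg) by (apply Hub; rewrite Ropp_involutive; exact Hr). lra.
  - exfalso. apply Hn. split.
    + exists 0. intros r Hr. apply Hnn in Hr. lra.
    + destruct (Hsmall 1) as [r [Hr _]]; [lra|].
      exists (- r). rewrite Ropp_involutive. exact Hr.
Qed.

Lemma ER_sup_nonpos (P : ER -> Prop) :
  (forall v, P v -> exists h, v = Fin h /\ h <= 0) -> ~ ER_lt (Fin 0) (ER_sup P).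
Proof.
  intros H. unfold ER_sup. cbv zeta.
  assert (Hb : bound (fun r => P (Fin r))).
  { exists 0. intros r Hr. destruct (H _ Hr) as [h [Hh Hh0]]. inversion Hh; lra. }
  destruct (excluded_middle_informative _) as [[HP | HP] | _].
  - destruct (H _ HP) as [h [Hh _]]. discriminate.
  - contradiction.
  - destruct (excluded_middle_informative _) as [He|]; simpl; [|lra].
    destruct (excluded_middle_informative _) as [Hb'|]; [|contradiction].
    destruct (completeness _ Hb' He) as [sg [Hub Hlub]]. simpl.
    assert (sg <= 0); [|lra]. apply Hlub.
    intros r Hr. destruct (H _ Hr) as [h [Hh Hh0]]. inversion Hh; lra.
Qed.

Lemma series_sum_bounded (a : nat -> R) (B : R) :
  (forall n, sum_f_R0 a n <= B) -> exists v, series_sum a = Fin v /\ v <= B.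
Proof.
  intros HB. unfold series_sum. cbv zeta.
  destruct (excluded_middle_informative _) as [Hb | Hn].
  - destruct (completeness _ _ _) as [sg [Hub Hlub]]. simpl. exists sg.
    split; [reflexivity|]. apply Hlub. intros r [n ->]. apply HB.
  - exfalso. apply Hn. exists B. intros r [n ->]. apply HB.
Qed.

Lemma series_sum_nonneg (a : nat -> R) (v : R) :
  (forall n, 0 <= a n) -> series_sum a = Fin v -> 0 <= v.
Proof.
  intros Ha. unfold series_sum. cbv zeta.
  destruct (excluded_middle_informative _) as [Hb | Hn]; [|discriminate].
  destruct (completeness _ _ _) as [sg [Hub Hlub]]. simpl. intros E. inversion E; subst.
  assert (sum_f_R0 a 0 <= v) by (apply Hub; exists 0%nat; reflexivity).
  specialize (Ha 0%nat). simpl in *. lra.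
Qed.

Lemma diam_le_bound {X : Type} (d : X -> X -> R) (A : X -> Prop) (r : R) :
  0 <= r -> diam_le d A r -> diam d A <= r.
Proof.
  intros Hr HA. unfold diam.
  destruct (excluded_middle_informative _) as [[Hb Hne] | Hn]; [|exact Hr].
  destruct (completeness _ _ _) as [sg [Hub Hlub]]. simpl.
  apply Hlub. intros q [x [y [Hx [Hy ->]]]]. apply HA; assumption.
Qed.

Section CheapCovers.
Context {X : Type}.
Variables (d : X -> X -> R) (s : R).
Hypothesis s_pos : 0 < s.

(** Padding a finite cover with empty pieces turns it into a sequence. *)
Definition empty_piece : (X -> Prop) * R := (fun _ => False, 0).

Lemma padded_piece l n : (forall p, In p l -> 0 <= snd p /\ diam_le d (fst p) (snd p)) ->
  0 <= snd (nth n l empty_piece) /\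
  diam_le d (fst (nth n l empty_piece)) (snd (nth n l empty_piece)).
Proof.
  intros H. destruct (Nat.lt_ge_cases n (length l)) as [Hn | Hn].
  - apply H, nth_In, Hn.
  - rewrite nth_overflow by exact Hn. simpl. split; [lra|]. intros x y [].
Qed.

Lemma padded_partial_sum l n :
  sum_f_R0 (fun i => powS (snd (nth i l empty_piece)) s) n <= lsum s l.
Proof.
  revert n. induction l as [|p l IH]; intros n.
  - simpl. rewrite sum_eq_R0; [lra|]. intros k _. destruct k; apply powS_0.
  - destruct n as [|n].
    + simpl. pose proof (lsum_nonneg s l). lra.
    + rewrite decomp_sum by lia. simpl. specialize (IH n). lra.
Qed.

Lemma fcover_delta_cover (delta : R) l :
  fcover d (fun _ => True) l -> (forall p, In p l -> snd p < delta) ->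
  exists U v, delta_cover d delta U /\
    Fin v = series_sum (fun n => powS (diam d (U n)) s) /\ v <= lsum s l.
Proof.
  intros [Hcov Hval] Hsmall.
  set (U := fun n => fst (nth n l empty_piece)).
  destruct (series_sum_bounded (fun n => powS (diam d (U n)) s) (lsum s l))
    as [v [Hv Hvb]].
  { intros n. eapply Rle_trans; [|apply (padded_partial_sum l n)].
    apply sum_Rle. intros k _. apply powS_mono; [exact s_pos|].
    destruct (padded_piece l k Hval) as [Hk0 Hk]. apply diam_le_bound; assumption. }
  exists U, v. split; [split|split; auto].
  - intros x. destruct (Hcov x I) as [p [Hp Hpx]].
    destruct (In_nth _ _ empty_piece Hp) as [n [_ Hn]].
    exists n. unfold U. rewrite Hn. exact Hpx.
  - intros n x y Hx Hy. destruct (padded_piece l n Hval) as [_ Hn].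
    specialize (Hn x y Hx Hy). unfold U in Hx.
    destruct (Nat.lt_ge_cases n (length l)) as [Hl | Hl].
    + pose proof (Hsmall _ (nth_In l empty_piece Hl)). lra.
    + rewrite nth_overflow in Hx by exact Hl. contradiction.
Qed.

Lemma hausdorff_null_of_cheap_covers :
  (forall eps, 0 < eps -> exists c, cost d s (fun _ => True) c /\ c < eps) ->
  ~ ER_lt (Fin 0) (hausdorff_measure d s).
Proof.
  intros Hcheap. apply ER_sup_nonpos. intros v [delta [Hdelta ->]].
  apply ER_inf_small.
  - intros r [U [_ HU]]. symmetry in HU.
    apply (series_sum_nonneg _ _ (fun n => powS_nonneg _ s) HU).
  - intros eps He.
    assert (Hpd : 0 < powS delta s).
    { unfold powS. destruct (Rle_dec delta 0); [lra|]. apply exp_pos. }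
    destruct (Hcheap (Rmin eps (powS delta s))) as [c [[l [Hl ->]] Hlt]];
      [apply Rmin_pos; assumption|].
    pose proof (Rmin_l eps (powS delta s)). pose proof (Rmin_r eps (powS delta s)).
    destruct (fcover_delta_cover delta l Hl) as [U [r [HU [Hr Hrb]]]].
    { intros p Hp. apply (powS_lt_inv _ _ s s_pos).
      pose proof (lsum_ge_piece s l p Hp). lra. }
    exists r. split; [exists U; auto | lra].
Qed.

(** The empty space has Hausdorff measure 0 (the empty cover costs nothing). *)
Lemma hausdorff_pos_inhabited :
  ER_lt (Fin 0) (hausdorff_measure d s) -> exists x : X, True.
Proof.
  intros Hpos. apply NNPP. intros Hempty.
  apply hausdorff_null_of_cheap_covers; [|exact Hpos].
  intros eps He. exists 0. split; [|exact He].
  exists nil. split; [split|reflexivity].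
  - intros x _. exfalso. eauto.
  - intros p [].
Qed.

Lemma content_pos_of_hausdorff_pos (A : X -> Prop) :
  ER_lt (Fin 0) (hausdorff_measure d s) -> (forall x, A x) -> (exists c, cost d s A c) ->
  0 < content d s A.
Proof.
  intros Hpos HA Hcov. destruct (Rlt_le_dec 0 (content d s A)) as [|Hle]; [assumption|].
  exfalso. apply hausdorff_null_of_cheap_covers; [|exact Hpos].
  intros eps He. destruct (content_approx d s A Hcov eps He) as [l [[Hc Hv] Hl]].
  exists (lsum s l). split; [|lra].
  exists l. split; [split; [intros x _; apply Hc, HA | exact Hv] | reflexivity].
Qed.

End CheapCovers.

Definition monotone_wrt {X : Type} (d : X -> X -> R) (le : X -> X -> Prop) (C : R) : Prop :=
  forall a b x y, le a x -> le x b -> le a y -> le y b -> d x y <= C * d a b.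

Lemma monotone_space_wrt {X : Type} (d : X -> X -> R) :
  is_metric d -> monotone_space d ->
  exists le C, linear_order le /\ 0 < C /\ monotone_wrt d le C.
Proof.
  intros [Hd0 _] [le [C0 [Hlin HC0]]]. exists le, (Rabs C0 + 1).
  split; [exact Hlin|]. split; [pose proof (Rabs_pos C0); lra|].
  intros a b x y Hax Hxb Hay Hyb.
  pose proof (HC0 a b x y (conj Hax Hxb) (conj Hay Hyb)).
  pose proof (Rle_abs C0). pose proof (Hd0 a b).
  assert (C0 * d a b <= (Rabs C0 + 1) * d a b) by (apply Rmult_le_compat_r; lra). lra.
Qed.

(** Reversing the order preserves linearity and monotonicity; this gives infima from suprema. *)
Lemma linear_order_flip {X : Type} (le : X -> X -> Prop) :
  linear_order le -> linear_order (fun x y => le y x).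
Proof.
  intros [Hr [Ha [Ht Htot]]]. split; [|split; [|split]]; eauto.
Qed.

Lemma monotone_wrt_flip {X : Type} (d : X -> X -> R) le C :
  is_metric d -> monotone_wrt d le C -> monotone_wrt d (fun x y => le y x) C.
Proof.
  intros [_ [_ [Hds _]]] HM a b x y H1 H2 H3 H4. rewrite (Hds a b). apply HM; assumption.
Qed.

Section OrderCompleteness.
Context {X : Type}.
Variables (d : X -> X -> R) (le : X -> X -> Prop) (C : R).
Hypothesis d_metric : is_metric d.
Hypothesis le_linear : linear_order le.
Hypothesis C_pos : 0 < C.
Hypothesis d_monotone : monotone_wrt d le C.
Hypothesis X_compact : compact_space d.

Lemma finite_max (S : X -> Prop) (l : list X) (s0 : X) : S s0 ->
  exists m, S m /\ forall x, In x l -> S x -> le x m.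
Proof.
  destruct le_linear as [Hr [_ [Ht Htot]]].
  intros Hs0. induction l as [|y l [m [Sm Hm]]].
  - exists s0. split; [exact Hs0|]. intros x [].
  - destruct (classic (S y)) as [Sy | Sy].
    + destruct (Htot y m) as [Hym | Hmy].
      * exists m. split; [exact Sm|]. intros x [<- | Hx] Sx; auto.
      * exists y. split; [exact Sy|]. intros x [<- | Hx] Sx; [apply Hr | eauto].
    + exists m. split; [exact Sm|]. intros x [<- | Hx] Sx; [contradiction | auto].
Qed.

Lemma guarded_open (P : Prop) (U : X -> Prop) : is_open d U -> is_open d (fun z => P /\ U z).
Proof. intros HU z [HP Hz]. destruct (HU z Hz) as [r [Hr Hball]]. eauto. Qed.

Lemma ball_open (x : X) (r : R) : is_open d (fun z => d x z < r).
Proof.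
  destruct d_metric as [_ [_ [_ Hdt]]]. intros z Hz.
  exists (r - d x z). split; [lra|]. intros w Hw. pose proof (Hdt x z w). lra.
Qed.

(** Strict lower sets are open: a point at distance [< d(z,y)/C] from [z < y]
    cannot lie above [y], by monotonicity on the interval from [z] to it. *)
Lemma strict_lower_open (y : X) : is_open d (fun z => le z y /\ z <> y).
Proof.
  destruct d_metric as [Hd0 [Hd1 _]]. destruct le_linear as [Hr [_ [Ht Htot]]].
  intros z [Hzy Hneq].
  assert (Hpos : 0 < d z y).
  { destruct (Hd0 z y) as [|Hzero]; auto. exfalso. apply Hneq, Hd1. auto. }
  exists (d z y / C). split; [apply Rdiv_lt_0_compat; assumption|].
  intros w Hw.
  assert (Hnot : ~ le y w).
  { intros Hyw. assert (d z y <= C * d z w) by (apply d_monotone; eauto).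
    assert (C * d z w < d z y); [|lra].
    apply Rmult_lt_reg_r with (/ C); [apply Rinv_0_lt_compat; lra|].
    rewrite Rmult_comm, <- Rmult_assoc, Rinv_l, Rmult_1_l by lra. exact Hw. }
  split.
  - destruct (Htot w y); tauto.
  - intros ->. apply Hnot, Hr.
Qed.

(** Otherwise the
    strict lower sets of points of [S] and small balls around upper bounds
    would form an open cover of [X] without finite subcover. *)
Lemma order_sup (S : X -> Prop) : (exists x, S x) ->
  exists x, (forall y, S y -> le y x) /\ forall r, 0 < r -> exists y, S y /\ d y x < r.
Proof.
  intros [s0 Hs0]. destruct le_linear as [Hr [Ha [_ Htot]]].
  destruct d_metric as [_ [Hd1 [Hds _]]].
  apply NNPP. intros Hno.
  assert (Hsep : forall x, (forall y, S y -> le y x) ->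
            exists r, 0 < r /\ forall y, S y -> r <= d y x).
  { intros x Hub. apply NNPP. intros Hn. apply Hno. exists x. split; [exact Hub|].
    intros r Hr0. apply NNPP. intros Hn2. apply Hn. exists r. split; [exact Hr0|].
    intros y Sy. destruct (Rlt_le_dec (d y x) r); [|assumption]. exfalso. eauto. }
  set (O := fun (i : X + X * R) (z : X) => match i with
    | inl y => S y /\ (le z y /\ z <> y)
    | inr (x, r) => (forall y, S y -> r <= d y x) /\ d x z < r end).
  destruct (X_compact (X + X * R)%type O) as [l Hl].
  - intros [y | [x r]]; apply guarded_open; [apply strict_lower_open | apply ball_open].
  - intros z. destruct (classic (forall y, S y -> le y z)) as [Hub | Hn].
    + destruct (Hsep z Hub) as [r [Hr0 Hr1]]. exists (inr (z, r)). simpl.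
      split; [exact Hr1|]. replace (d z z) with 0 by (symmetry; apply Hd1; reflexivity). exact Hr0.
    + apply not_all_ex_not in Hn. destruct Hn as [y Hy].
      apply imply_to_and in Hy. destruct Hy as [Sy Hy].
      exists (inl y). simpl. split; [exact Sy|]. split.
      * destruct (Htot y z); tauto.
      * intros ->. apply Hy, Hr.
  - set (pt := fun i : X + X * R => match i with inl y => y | inr (x, _) => x end).
    destruct (finite_max S (map pt l) s0 Hs0) as [m [Sm Hmax]].
    destruct (Hl m) as [[y | [x r]] [Hi Hm]]; simpl in Hm.
    + destruct Hm as [Sy [Hmy Hneq]]. apply Hneq, Ha; [exact Hmy|].
      apply (Hmax y); [apply in_map_iff; exists (inl y); auto | exact Sy].
    + destruct Hm as [Hsepx Hx]. specialize (Hsepx m Sm). rewrite Hds in Hx. lra.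
Qed.

End OrderCompleteness.

Lemma order_inf {X : Type} (d : X -> X -> R) le C :
  is_metric d -> linear_order le -> 0 < C -> monotone_wrt d le C -> compact_space d ->
  forall S : X -> Prop, (exists x, S x) ->
  exists x, (forall y, S y -> le x y) /\ forall r, 0 < r -> exists y, S y /\ d y x < r.
Proof.
  intros Hm Hlin HC HM Hc S HS.
  exact (order_sup d (fun x y => le y x) C Hm (linear_order_flip le Hlin) HC
           (monotone_wrt_flip d le C Hm HM) Hc S HS).
Qed.

Lemma order_extremes {X : Type} (d : X -> X -> R) le C :
  is_metric d -> linear_order le -> 0 < C -> monotone_wrt d le C -> compact_space d ->
  forall x0 : X, exists m M, (forall x, le m x) /\ (forall x, le x M).
Proof.
  intros Hm Hlin HC HM Hc x0.
  destruct (order_inf d le C Hm Hlin HC HM Hc (fun _ => True)) as [m [Hmin _]];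
    [exists x0; exact I|].
  destruct (order_sup d le C Hm Hlin HC HM Hc (fun _ => True)) as [M [HMax _]];
    [exists x0; exact I|].
  exists m, M. split; intros x; auto.
Qed.

Section DistributionFunction.
Context {X : Type}.
Variables (d : X -> X -> R) (s : R) (le : X -> X -> Prop) (C : R).
Hypothesis d_metric : is_metric d.
Hypothesis s_pos : 0 < s.
Hypothesis le_linear : linear_order le.
Hypothesis C_pos : 0 < C.
Hypothesis d_monotone : monotone_wrt d le C.
Hypothesis X_compact : compact_space d.
Variables (m M : X).
Hypothesis m_least : forall x, le m x.
Hypothesis M_greatest : forall x, le x M.

Definition g (x : X) : R := content d s (fun y => le y x).

(** The whole space, and hence every subset, is covered by one set of diameter [C d(m,M)]. *)
Lemma coverable (A : X -> Prop) : exists c, cost d s A c.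
Proof.
  destruct d_metric as [Hd0 _].
  eexists. exists ((fun _ => True, C * d m M) :: nil). split; [split|reflexivity].
  - intros x _. exists (fun _ => True, C * d m M). simpl. auto.
  - intros p [<- | []]. simpl. split.
    + pose proof (Hd0 m M). apply Rmult_le_pos; lra.
    + intros x y _ _. apply d_monotone; auto.
Qed.

Lemma g_range x : 0 <= g x <= g M.
Proof.
  split; [apply content_nonneg|]. apply content_mono; [apply coverable|]. auto.
Qed.

Lemma g_mono a b : le a b -> g a <= g b.
Proof.
  destruct le_linear as [_ [_ [Ht _]]].
  intros Hab. apply content_mono; [apply coverable|]. eauto.
Qed.

Lemma g_split a b (B : X -> Prop) : le a b ->
  (forall y, le a y -> le y b -> y <> a -> B y) -> g b <= g a + content d s B.
Proof.
  destruct le_linear as [Hr [_ [_ Htot]]].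
  intros Hab HB. apply content_subadditive; try apply coverable.
  intros y Hyb. destruct (Htot y a) as [|Hay]; auto.
  destruct (classic (y = a)) as [-> | Hya]; auto.
Qed.

(** The interval [[a,b]] has diameter at most [C d(a,b)], so it bounds the increment of [g]. *)
Lemma g_increment a b : le a b -> g b <= g a + powS (C * d a b) s.
Proof.
  destruct d_metric as [Hd0 _].
  intros Hab. eapply Rle_trans; [apply (g_split a b (fun y => le a y /\ le y b) Hab); auto|].
  apply Rplus_le_compat_l, content_diam.
  - pose proof (Hd0 a b). apply Rmult_le_pos; lra.
  - intros x y [H1 H2] [H3 H4]. apply d_monotone; assumption.
Qed.

Lemma g_holder : holder d s g.
Proof.
  destruct d_metric as [Hd0 [_ [Hds _]]]. destruct le_linear as [_ [_ [_ Htot]]].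
  exists (Rpower C s).
  assert (Hle : forall a b, le a b -> Rabs (g a - g b) <= Rpower C s * powS (d a b) s).
  { intros a b Hab. rewrite <- powS_mul by auto.
    pose proof (g_increment a b Hab). pose proof (g_mono a b Hab).
    rewrite Rabs_left1 by lra. lra. }
  intros a b. destruct (Htot a b) as [Hab | Hba]; auto.
  rewrite Rabs_minus_sym, Hds. auto.
Qed.

Lemma g_small_increment eps : 0 < eps ->
  exists delta, 0 < delta /\ forall a b, le a b -> d a b < delta -> g b < g a + eps.
Proof.
  intros He. destruct (powS_small s eps s_pos He) as [del [Hdel Hsmall]].
  exists (del / C). split; [apply Rdiv_lt_0_compat; assumption|].
  intros a b Hab Hd. pose proof (g_increment a b Hab).
  assert (Hsmall_dist : C * d a b < del); [|pose proof (Hsmall _ Hsmall_dist); lra].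
  apply Rmult_lt_reg_r with (/ C); [apply Rinv_0_lt_compat; lra|].
  rewrite (Rmult_comm C), Rmult_assoc, Rinv_r, Rmult_1_r by lra. exact Hd.
Qed.

Lemma content_point (w : X) : content d s (fun y => y = w) <= 0.
Proof.
  destruct d_metric as [_ [Hd1 _]].
  rewrite <- (powS_0 s). apply content_diam; [lra|].
  intros y1 y2 -> ->. right. apply Hd1. reflexivity.
Qed.

(** The lower set of the least point is a single point. *)
Lemma g_least : g m = 0.
Proof.
  destruct le_linear as [_ [Ha _]].
  apply Rle_antisym; [|apply content_nonneg].
  eapply Rle_trans; [|apply (content_point m)].
  apply content_mono; [apply coverable|]. auto.
Qed.

Lemma g_at_sup_le t x : (forall y, g y <= t -> le y x) ->
  (forall r, 0 < r -> exists y, g y <= t /\ d y x < r) -> g x <= t.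
Proof.
  intros Hub Hcl. apply Rle_plus_epsilon. intros eps He.
  destruct (g_small_increment eps He) as [del [Hdel Hinc]].
  destruct (Hcl del Hdel) as [y [Hy Hyx]].
  pose proof (Hinc y x (Hub y Hy) Hyx). lra.
Qed.

(** An upper bound [x] of [{ y | g y <= t }] has [t <= g x] when [t <= g M]:
    otherwise the infimum [w] of the points above [x] is either approached from
    above (and points slightly above [x] have [g <= t]) or is the successor of
    [x] (and [g w = g x <= t]); both contradict that [x] is an upper bound. *)
Lemma g_at_sup_ge t x : t <= g M -> (forall y, g y <= t -> le y x) -> t <= g x.
Proof.
  destruct le_linear as [Hr [Ha [Ht Htot]]]. destruct d_metric as [_ [_ [Hds _]]].
  intros HtM Hub. apply Rnot_lt_le. intros Hlt.
  assert (Habove : exists z, ~ le z x).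
  { exists M. intros HMx. assert (M = x) by auto. subst. lra. }
  destruct (order_inf d le C d_metric le_linear C_pos d_monotone X_compact
              (fun z => ~ le z x) Habove) as [w [Hwlb Hwcl]].
  destruct (classic (le w x)) as [Hwx | Hwx].
  - destruct (g_small_increment (t - g x)) as [del [Hdel Hinc]]; [lra|].
    destruct (Hwcl (del / C)) as [z [Hzx Hz]]; [apply Rdiv_lt_0_compat; assumption|].
    assert (Hxz : le x z) by (destruct (Htot x z); tauto).
    assert (d x z <= C * d w z) by (apply d_monotone; eauto).
    assert (Hxz_small : d x z < del).
    { rewrite Hds in Hz.
      assert (C * d w z < del); [|lra].
      apply Rmult_lt_reg_r with (/ C); [apply Rinv_0_lt_compat; lra|].
      rewrite (Rmult_comm C), Rmult_assoc, Rinv_r, Rmult_1_r by lra. exact Hz. }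
    pose proof (Hinc x z Hxz Hxz_small). apply Hzx, Hub. lra.
  - assert (Hxw : le x w) by (destruct (Htot x w); tauto).
    assert (g w <= g x + content d s (fun y => y = w)).
    { apply g_split; [exact Hxw|]. intros y Hxy Hyw Hyx.
      apply Ha; [exact Hyw|]. apply Hwlb. intros Hyx'. apply Hyx; auto. }
    pose proof (content_point w). apply Hwx, Hub. lra.
Qed.

Lemma g_onto t : 0 <= t <= g M -> exists x, g x = t.
Proof.
  intros [Ht0 HtM].
  assert (Hne : exists y, g y <= t) by (exists m; rewrite g_least; exact Ht0).
  destruct (order_sup d le C d_metric le_linear C_pos d_monotone X_compact
              (fun y => g y <= t) Hne) as [x [Hub Hcl]].
  exists x. apply Rle_antisym; [apply g_at_sup_le | apply g_at_sup_ge]; assumption.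
Qed.

End DistributionFunction.

Theorem theorem2p1 (X : Type) (d : X -> X -> R) (s : R) :
  is_metric d ->
  0 < s ->
  compact_space d ->
  monotone_space d ->
  ER_lt (Fin 0) (hausdorff_measure d s) ->
  exists g : X -> R,
    holder d s g /\
    exists a b : R, a < b /\
      forall y, (exists x, g x = y) <-> (a <= y /\ y <= b).
Proof.
  intros Hm Hs Hc Hmon Hpos.
  destruct (monotone_space_wrt d Hm Hmon) as [le [C [Hlin [HC HM]]]].
  destruct (hausdorff_pos_inhabited d s Hs Hpos) as [x0 _].
  destruct (order_extremes d le C Hm Hlin HC HM Hc x0) as [m [M [Hmin HMax]]].
  exists (g d s le). split; [exact (g_holder d s le C Hm Hlin HC HM m M Hmin HMax)|].
  exists 0, (g d s le M). split.
  - apply (content_pos_of_hausdorff_pos d s Hs); [exact Hpos | exact HMax |].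
    exact (coverable d s le C Hm HC HM m M Hmin HMax _).
  - intros t. split.
    + intros [x <-]. exact (g_range d s le C Hm HC HM m M Hmin HMax x).
    + exact (g_onto d s le C Hm Hs Hlin HC HM Hc m M Hmin HMax t).
Qed.
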